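(* For every string $T\in[1..\sigma]^{n-1}\#$, the number $z_T$ of factors in the LZ77 factorization of $T$ satisfies $z_T\le|\mathcal{E}^r_T|+|\mathcal{F}^r_T|$.
   Context: Let $\sigma\ge1$, $\#=0\notin[1..\sigma]$, and $T\in[1..\sigma]^{n-1}\#$ of length $n\ge2$. LZ77 factorization: let $A$ be a string containing each distinct character of $T$ exactly once, and consider $AT$ (so $T$ is virtually preceded by its alphabet). The factorization $T=T_1T_2\cdots T_z$ is built greedily: if $T_1\cdots T_i$ is a prefix of $T$ of length $k$, then $T_{i+1}$ is the longest prefix of $T[k+1..n]$ that has an occurrence in $AT$ starting at a position corresponding to some $j\le k$ in $T$-coordinates (positions of $A$ allowed; overlap with $T[k+1..]$ allowed); $z_T=z$. For a string $W$, $\mathcal{P}_T(W)$ is the set of starting positions of occurrences of $W$ in the circular version of $T$; $\Sigma^{\ell}_T(W)=\{a: \mathcal{P}_T(aW)\neq\emptyset\}$, $\Sigma^{r}_T(W)=\{b:\mathcal{P}_T(Wb)\ne\emptyset\}$. A repeat is a string $W$ (possibly empty) with $|\mathcal{P}_T(W)|>1$; right-maximal iff $|\Sigma^r_T(W)|>1$, left-maximal iff $|\Sigma^\ell_T(W)|>1$, maximal repeat iff both; $\mathcal{M}_T$ is the set of maximal repeats. $\mathsf{ST}_T$ is the suffix tree of $T$, $\ell(v)$ the label of node $v$. $\mathcal{E}^r_T$ is the set of edges $(v,w)$ of $\mathsf{ST}_T$ with $v=\mathrm{parent}(w)$ and both $\ell(v),\ell(w)\in\mathcal{M}_T$; $\mathcal{F}^r_T$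 is the set of such edges with $\ell(v)\in\mathcal{M}_T$ and $\ell(w)\notin\mathcal{M}_T$. *)

(* Strings are [seq nat]; the end marker # is 0. *)
From mathcomp Require Import all_boot.
Set Implicit Arguments. Unset Strict Implicit. Unset Printing Implicit Defensive.

(* [lzlen A T k] : length of the LZ77 factor starting at 0-based position k of T
   (i.e. after a prefix of length k has been factorized): the longest l <= |T|-k
   such that T[k..k+l) occurs in A ++ T starting at a position p < |A| + k
   (i.e. at a T-coordinate j <= k, positions of A allowed, overlap allowed). *)
Definition lzlen (A T : seq nat) (k : nat) : nat :=
  \max_(l < (size T - k).+1 |
        [exists p : 'I_(size A + k),
           take l (drop p (A ++ T)) == take l (drop k T)]) l.

(* Greedy factorization, counting factors from position k.  The fuel is only
   a termination device: every factor has length >= 1 (A contains every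
   character of T), so fuel [size T] suffices. *)
Fixpoint lz_count (A T : seq nat) (fuel k : nat) : nat :=
  match fuel with
  | 0 => 0
  | f.+1 => if k < size T then (lz_count A T f (k + lzlen A T k)).+1 else 0
  end.

Definition lz_z (A T : seq nat) : nat := lz_count A T (size T) 0.

Definition circ_occ (T W : seq nat) (i : nat) : bool :=
  all (fun t => nth 0 T ((i + t) %% size T) == nth 0 W t) (iota 0 (size W)).

Definition occs (T W : seq nat) : seq nat :=
  [seq i <- iota 0 (size T) | circ_occ T W i].

(* Sigma^l_T(W), Sigma^r_T(W): a character a with P_T(aW) nonempty necessarily
   occurs in T, so it suffices to range over the distinct characters of T. *)
Definition left_ext (T W : seq nat) : seq nat :=
  [seq a <- undup T | occs T (a :: W) != [::]].
Definition right_ext (T W : seq nat) : seq nat :=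
  [seq b <- undup T | occs T (rcons W b) != [::]].

Definition is_repeat (T W : seq nat) : bool := 1 < size (occs T W).
Definition is_maxrep (T W : seq nat) : bool :=
  [&& is_repeat T W, 1 < size (right_ext T W) & 1 < size (left_ext T W)].

Definition substrings (T : seq nat) : seq (seq nat) :=
  undup (flatten [seq [seq take l (drop i T) | l <- iota 0 (size T - i).+1]
                  | i <- iota 0 (size T)]).

Definition st_right_ext (T W : seq nat) : seq nat :=
  undup [seq nth 0 T (i + size W) |
          i <- iota 0 (size T) & (i + size W < size T) &&
                                 (take (size W) (drop i T) == W)].

(* labels of nodes of ST_T: the root (empty string), the internal nodes
   (right-branching substrings), and the leaves (nonempty suffixes of T). *)
Definition st_node (T W : seq nat) : bool :=
  [|| W == [::],
      1 < size (st_right_ext T W)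
    | (0 < size W <= size T) && (drop (size T - size W) T == W)].

Definition st_nodes (T : seq nat) : seq (seq nat) :=
  [seq W <- substrings T | st_node T W].

(* (v,w) is an edge of ST_T with v = parent(w): v is the longest node label
   that is a proper prefix of w. *)
Definition st_edge (T v w : seq nat) : bool :=
  [&& st_node T v, st_node T w, prefix v w, size v < size w &
      all (fun m => ~~ st_node T (take m w))
          (iota (size v).+1 (size w - (size v).+1))].

Definition st_edges (T : seq nat) : seq (seq nat * seq nat) :=
  [seq e <- [seq (v, w) | v <- st_nodes T, w <- st_nodes T] | st_edge T e.1 e.2].

Definition Er (T : seq nat) : seq (seq nat * seq nat) :=
  [seq e <- st_edges T | is_maxrep T e.1 && is_maxrep T e.2].
Definition Fr (T : seq nat) : seq (seq nat * seq nat) :=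
  [seq e <- st_edges T | is_maxrep T e.1 && ~~ is_maxrep T e.2].

From mathcomp Require Import all_boot zify.
Set Implicit Arguments. Unset Strict Implicit. Unset Printing Implicit Defensive.

(* Charge each LZ77 factor, starting at [k], to an edge of the suffix tree
   leaving a maximal repeat.  Let [W = T[k..e)] be the longest prefix of
   [T[k..]] with an earlier occurrence in [T]; the endmarker forces [e < |T|],
   and [W] is right-maximal because [W T[e]] has no earlier occurrence.
   Extending [W] to the left as long as its number of (circular) occurrences
   does not change yields [M = T[i..e)], which stays right-maximal and becomes
   left-maximal, so the edge leaving [M] with first character [T[e]] lies in
   [E^r_T] or [F^r_T].  Two factors sharing [M] and [T[e]] would give the later
   one an earlier occurrence longer than [W]. *)

Definition substr (T : seq nat) i m := take m (drop i T).

Lemma nth_substr T i m t : t < m -> nth 0 (substr T i m) t = nth 0 T (i + t).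
Proof. by move=> ltm; rewrite /substr nth_take // nth_drop. Qed.

Lemma size_substr T i m : size (substr T i m) = minn m (size T - i).
Proof. by rewrite /substr size_take size_drop; case: ltnP => _; lia. Qed.

Lemma size_substr_fit T i m : i + m <= size T -> size (substr T i m) = m.
Proof. by rewrite size_substr; lia. Qed.

Lemma substr_eqP T a b m : a + m <= size T -> b + m <= size T ->
  reflect (forall t, t < m -> nth 0 T (a + t) = nth 0 T (b + t))
          (substr T a m == substr T b m).
Proof.
move=> fit_a fit_b; apply: (iffP eqP) => [E t ltm | E].
  by rewrite -(nth_substr T a ltm) -(nth_substr T b ltm) E.
apply: (eq_from_nth (x0 := 0)); first by rewrite !size_substr_fit.
by move=> t; rewrite size_substr_fit // => ltm; rewrite !nth_substr // E.
Qed.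

Lemma substr_fit_eq T a b m : 0 < m -> substr T a m = substr T b m ->
  b + m <= size T -> a + m <= size T.
Proof. by move=> m_gt0 /(congr1 size); rewrite !size_substr; lia. Qed.

Lemma drop_substr T i s d : i + s <= size T -> d <= s ->
  drop d (substr T i s) = substr T (i + d) (s - d).
Proof.
move=> fit le_ds; apply: (eq_from_nth (x0 := 0)).
  by rewrite size_drop !size_substr_fit //; lia.
move=> t; rewrite size_drop size_substr_fit // => ltt.
by rewrite nth_drop !nth_substr ?addnA //; lia.
Qed.

Lemma substr_cons T i s : 0 < i -> i <= size T ->
  substr T i.-1 s.+1 = nth 0 T i.-1 :: substr T i s.
Proof. by move=> i_gt0 le_iT; rewrite /substr (drop_nth 0) /= ?prednK //; lia. Qed.

Lemma mem_substrings T i l : i < size T -> l <= size T - i ->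
  substr T i l \in substrings T.
Proof.
move=> lt_iT le_l; rewrite /substrings mem_undup.
by apply/flatten_mapP; exists i; rewrite ?mem_iota //; apply: map_f; rewrite mem_iota; lia.
Qed.

Lemma size_gt1_mem (X : eqType) (s : seq X) a b :
  a \in s -> b \in s -> a != b -> 1 < size s.
Proof. by case: s => [|c [|d s]] //=; rewrite !inE => /eqP -> /eqP ->; rewrite eqxx. Qed.

Section BigmaxCond.
Variables (N : nat) (P : pred nat).

Lemma bigmax_cond_ub y : y < N -> P y -> y <= \max_(i < N | P i) i.
Proof. by move=> ltyN Py; apply: (leq_bigmax_cond (Ordinal ltyN)). Qed.

Lemma bigmax_cond_lt : 0 < N -> \max_(i < N | P i) i < N.
Proof.
move=> N_gt0; rewrite -(prednK N_gt0) ltnS.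
by apply/bigmax_leqP => i _; have := ltn_ord i; lia.
Qed.

Lemma bigmax_condP y : y < N -> P y -> P (\max_(i < N | P i) i).
Proof.
move=> ltyN Py.
have nonempty : 0 < #|(fun i : 'I_N => P i)| by apply/card_gt0P; exists (Ordinal ltyN).
by have [i0 Pi0 ->] := eq_bigmax_cond (fun i : 'I_N => nat_of_ord i) nonempty.
Qed.

Lemma bigmax_cond_gt0 : 0 < \max_(i < N | P i) i -> exists2 y, y < N & P y.
Proof.
case: (boolP [exists i : 'I_N, P i]) => [/existsP [i Pi]|/existsPn noP]; first by exists i.
by rewrite big_pred0 // => i; apply/negbTE/noP.
Qed.

End BigmaxCond.

Lemma circ_occP T W x :
  reflect (forall t, t < size W -> nth 0 T ((x + t) %% size T) = nth 0 W t)
          (circ_occ T W x).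
Proof.
apply: (iffP allP) => [occ t ltt | occ t]; first by apply/eqP/occ; rewrite mem_iota.
by rewrite mem_iota => /andP [_ ltt]; apply/eqP/occ.
Qed.

Lemma circ_occ_substr T i m : circ_occ T (substr T i m) i.
Proof.
apply/circ_occP => t; rewrite size_substr => ltt.
by rewrite nth_substr ?modn_small //; lia.
Qed.

Lemma circ_occ_drop T W x d :
  circ_occ T W x -> circ_occ T (drop d W) ((x + d) %% size T).
Proof.
move/circ_occP => occ; apply/circ_occP => t; rewrite size_drop => ltt.
by rewrite modnDml -addnA occ ?nth_drop //; lia.
Qed.

Definition next_char (T W : seq nat) x := nth 0 T ((x + size W) %% size T).
Definition prev_pos (T : seq nat) x := (x + (size T).-1) %% size T.

Lemma prev_pos0 T : 0 < size T -> prev_pos T 0 = (size T).-1.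
Proof. by move=> T_gt0; rewrite /prev_pos add0n modn_small // prednK. Qed.

Lemma prev_pos_gt0 T x : 0 < x < size T -> prev_pos T x = x.-1.
Proof.
move=> /andP [x_gt0 lt_xT]; rewrite /prev_pos.
by rewrite (_ : x + _ = x.-1 + size T) ?modnDr ?modn_small //; lia.
Qed.

Lemma circ_occ_rcons T W x : circ_occ T W x -> circ_occ T (rcons W (next_char T W x)) x.
Proof.
move/circ_occP => occ; apply/circ_occP => t; rewrite size_rcons ltnS nth_rcons.
by case: ltngtP => // [/occ | ->].
Qed.

Lemma circ_occ_cons T W x : 0 < size T -> circ_occ T W x ->
  circ_occ T (nth 0 T (prev_pos T x) :: W) (prev_pos T x).
Proof.
move=> T_gt0 /circ_occP occ; apply/circ_occP => [[|t]] /=; first by rewrite addn0 modn_mod.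
rewrite ltnS => ltt; rewrite /prev_pos modnDml -occ //.
have -> : x + (size T).-1 + t.+1 = x + t + size T by lia.
by rewrite modnDr.
Qed.

Lemma modn_addr_inj n d x y : x < n -> y < n -> (x + d) %% n = (y + d) %% n -> x = y.
Proof. by move=> ltx lty /eqP; rewrite eqn_modDr !modn_small // => /eqP. Qed.

Lemma mem_occs T W x : (x \in occs T W) = (x < size T) && circ_occ T W x.
Proof. by rewrite mem_filter mem_iota andbC. Qed.

Lemma uniq_occs T W : uniq (occs T W).
Proof. exact/filter_uniq/iota_uniq. Qed.

Lemma size_occs_nil T : size (occs T [::]) = size T.
Proof. by rewrite /occs (@eq_filter _ _ predT) ?filter_predT ?size_iota. Qed.

Lemma uniq_occs_shift T W d : uniq [seq (x + d) %% size T | x <- occs T W].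
Proof.
rewrite map_inj_in_uniq ?uniq_occs // => x y.
by rewrite !mem_occs => /andP [ltx _] /andP [lty _]; apply: modn_addr_inj.
Qed.

Lemma size_occs_shift_le T V W d :
  {in occs T V, forall x, (x + d) %% size T \in occs T W} ->
  size (occs T V) <= size (occs T W).
Proof.
move=> shiftVW; rewrite -(size_map (fun x => (x + d) %% size T)).
by apply: uniq_leq_size (uniq_occs_shift T V d) _ => _ /mapP [x occx ->]; apply: shiftVW.
Qed.

Lemma right_ext_next_char T W x : x \in occs T W -> next_char T W x \in right_ext T W.
Proof.
rewrite mem_occs mem_filter mem_undup => /andP [ltx occx].
rewrite mem_nth ?ltn_mod ?andbT; last by lia.
have : x \in occs T (rcons W (next_char T W x)) by rewrite mem_occs ltx circ_occ_rcons.
by case: occs.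
Qed.

Lemma left_ext_prev_char T W x : x \in occs T W -> nth 0 T (prev_pos T x) \in left_ext T W.
Proof.
rewrite mem_occs mem_filter mem_undup => /andP [ltx occx].
have T_gt0 : 0 < size T by lia.
rewrite mem_nth ?ltn_mod ?andbT //.
have : prev_pos T x \in occs T (nth 0 T (prev_pos T x) :: W).
  by rewrite mem_occs ltn_mod T_gt0 circ_occ_cons.
by case: occs.
Qed.

Lemma size_occs_cons T W a : 0 < size T ->
  {in occs T W, forall y, nth 0 T (prev_pos T y) = a} ->
  size (occs T (a :: W)) = size (occs T W).
Proof.
move=> T_gt0 prev_a; apply/anti_leq/andP; split.
  apply: (size_occs_shift_le (d := 1)) => y; rewrite !mem_occs ltn_mod T_gt0.
  by move=> /andP [_ /(circ_occ_drop 1)]; rewrite /= drop0.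
apply: (size_occs_shift_le (d := (size T).-1)) => y occy.
rewrite mem_occs ltn_mod T_gt0 -(prev_a y occy) circ_occ_cons //.
by move: occy; rewrite mem_occs => /andP [].
Qed.

Definition branches_right T W := exists x1 x2,
  [/\ x1 \in occs T W, x2 \in occs T W & next_char T W x1 != next_char T W x2].
Definition branches_left T W := exists y1 y2,
  [/\ y1 \in occs T W, y2 \in occs T W &
      nth 0 T (prev_pos T y1) != nth 0 T (prev_pos T y2)].

Lemma branches_maxrep T W : branches_right T W -> branches_left T W -> is_maxrep T W.
Proof.
move=> [x1 [x2 [occ1 occ2 next_neq]]] [y1 [y2 [occ1' occ2' prev_neq]]].
have x_neq : x1 != x2 by apply: contraNneq next_neq => ->.
rewrite /is_maxrep /is_repeat (size_gt1_mem occ1 occ2 x_neq).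
rewrite (size_gt1_mem (right_ext_next_char occ1) (right_ext_next_char occ2) next_neq).
by rewrite (size_gt1_mem (left_ext_prev_char occ1') (left_ext_prev_char occ2') prev_neq).
Qed.

Lemma st_node_suffix T i : i < size T -> st_node T (substr T i (size T - i)).
Proof.
move=> lt_iT; rewrite /st_node /substr take_oversize ?size_drop //.
by rewrite subKn ?(ltnW lt_iT) // eqxx subn_gt0 lt_iT leq_subr !orbT.
Qed.

(* The child is the shortest node label extending [substr T i s] along the
   occurrence at [i]; a leaf always qualifies, so the minimum exists. *)
Lemma st_edge_from T i s : i + s < size T -> st_node T (substr T i s) ->
  exists w, (substr T i s, w) \in st_edges T /\ nth 0 w s = nth 0 T (i + s).
Proof.
move=> fit node_v.
pose P m := (s < m) && st_node T (substr T i m).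
have leaf : P (size T - i) by rewrite /P st_node_suffix ?andbT //; lia.
have [m /andP [lt_sm node_w] minm] := ex_minnP (ex_intro P _ leaf).
have le_m : m <= size T - i by apply: minm.
exists (substr T i m); split; last by rewrite nth_substr.
rewrite mem_filter /st_edge /= node_v node_w.
rewrite allpairs_f ?andbT; last 2 first.
- by rewrite mem_filter node_v mem_substrings //; lia.
- by rewrite mem_filter node_w mem_substrings //; lia.
rewrite prefixE !size_substr_fit ?lt_sm; try lia.
rewrite /substr take_takel ?eqxx /=; last by lia.
apply/allP => m'; rewrite mem_iota => /andP [lt_sm' lt_m'm].
rewrite take_takel; last by lia.
apply/negP => node_m'; have := minm m'; rewrite /P node_m' andbT; lia.
Qed.

Definition lz_source (A T : seq nat) k (l : nat) := [exists p : 'I_(size A + k),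
  take l (drop p (A ++ T)) == take l (drop k T)].

Lemma lzlen_ge A T k m j : j < k -> m <= size T - k ->
  substr T j m = substr T k m -> m <= lzlen A T k.
Proof.
move=> lt_jk le_m eq_jk; apply: (bigmax_cond_ub (P := lz_source A T k)); first by rewrite ltnS.
have lt_p : size A + j < size A + k by rewrite ltn_add2l.
apply/existsP; exists (Ordinal lt_p) => /=.
by rewrite drop_cat ltnNge leq_addr /= addKn; apply/eqP.
Qed.

Lemma lzlen_gt0 (A T : seq nat) k : A =i T -> k < size T -> 0 < lzlen A T k.
Proof.
move=> eq_AT lt_kT; set a := nth 0 T k.
have A_a : a \in A by rewrite eq_AT mem_nth.
have lt_aA : index a A < size A by rewrite index_mem.
apply: (bigmax_cond_ub (P := lz_source A T k) (y := 1)); first by rewrite ltnS subn_gt0.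
have lt_p : index a A < size A + k by lia.
apply/existsP; exists (Ordinal lt_p) => /=.
have lt_aAT : index a A < size (A ++ T) by rewrite size_cat; lia.
by rewrite (drop_nth 0 lt_aAT) (drop_nth 0 lt_kT) nth_cat lt_aA nth_index //= !take0.
Qed.

Section EndmarkedText.

Variable T : seq nat.
Hypothesis T_gt1 : 1 < size T.
Hypothesis T_last : nth 0 T (size T).-1 = 0.
Hypothesis T_pos : forall i, i < (size T).-1 -> 0 < nth 0 T i.

Lemma endmarker_unique i : i < size T -> nth 0 T i = 0 -> i = (size T).-1.
Proof.
move=> lt_iT Ti0; case: (ltnP i (size T).-1) => [/T_pos|]; last by lia.
by rewrite Ti0.
Qed.

Lemma occs_everywhere W : size (occs T W) = size T -> W = [::].
Proof.
case: W => // a W occ_all.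
have /allP occ : all (circ_occ T (a :: W)) (iota 0 (size T)).
  by rewrite all_count -size_filter size_iota occ_all.
have /circ_occP occ_first : circ_occ T (a :: W) 0 by apply: occ; rewrite mem_iota; lia.
have /circ_occP occ_last : circ_occ T (a :: W) (size T).-1.
  by apply: occ; rewrite mem_iota; lia.
have T_pred_gt0 : 0 < (size T).-1 by lia.
move: (occ_first 0 isT) (occ_last 0 isT) (T_pos T_pred_gt0).
by rewrite !addn0 !modn_small ?T_last //=; lia.
Qed.

Lemma circ_occ_linear W x : x < size T -> (forall t, t < size W -> 0 < nth 0 W t) ->
  circ_occ T W x -> x + size W < size T /\ substr T x (size W) = W.
Proof.
move=> lt_xT W_pos /circ_occP occ.
case: (ltnP (x + size W) (size T)) => [fit | wrap].
  split => //; apply: (eq_from_nth (x0 := 0)); first by rewrite size_substr_fit; lia.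
  move=> t; rewrite size_substr_fit; last by lia.
  by move=> ltt; rewrite nth_substr // -occ // modn_small //; lia.
have ltt : (size T).-1 - x < size W by lia.
have := occ _ ltt; rewrite (_ : x + _ = (size T).-1); last by lia.
by rewrite modn_small ?T_last; [move=> W0; have := W_pos _ ltt; rewrite -W0 | lia].
Qed.

(* Circular occurrences of a string avoiding the endmarker are linear, so the
   distinct circular right extensions are also linear ones. *)
Lemma st_right_ext_branches W : (forall t, t < size W -> 0 < nth 0 W t) ->
  branches_right T W -> 1 < size (st_right_ext T W).
Proof.
move=> W_pos [x1 [x2 [occ1 occ2 next_neq]]].
suff st_next x : x \in occs T W -> next_char T W x \in st_right_ext T W.
  exact: size_gt1_mem (st_next _ occ1) (st_next _ occ2) next_neq.
rewrite mem_occs => /andP [lt_xT occx].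
have [fit eqW] := circ_occ_linear lt_xT W_pos occx.
rewrite mem_undup /next_char modn_small //.
by apply: map_f; rewrite mem_filter mem_iota fit lt_xT /= andbT; exact/eqP.
Qed.

(* Unlike [lzlen], [prev_len k] only looks for earlier sources inside [T]. *)
Definition occurs_before k m := [exists j : 'I_k, substr T j m == substr T k m].
Definition prev_len k := \max_(m < (size T - k).+1 | occurs_before k m) m.
Local Notation rep_end k := (k + prev_len k).

Lemma prev_len_le k : prev_len k <= size T - k.
Proof. by rewrite -ltnS; apply: bigmax_cond_lt (occurs_before k) _. Qed.

Lemma prev_len_max k m j : m <= size T - k -> j < k ->
  substr T j m = substr T k m -> m <= prev_len k.
Proof.
move=> le_m lt_jk eq_jk; apply: (bigmax_cond_ub (P := occurs_before k)); first by rewrite ltnS.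
by apply/existsP; exists (Ordinal lt_jk); rewrite /= eq_jk.
Qed.

Lemma prev_lenP k : 0 < prev_len k ->
  exists2 j, j < k & substr T j (prev_len k) = substr T k (prev_len k).
Proof.
move=> /(bigmax_cond_gt0 (P := occurs_before k)) [m lt_m occ_m].
have /existsP [j /eqP eq_jk] := bigmax_condP lt_m occ_m.
by exists j.
Qed.

Lemma prev_len_le_lzlen A k : prev_len k <= lzlen A T k.
Proof.
case: (posnP (prev_len k)) => [-> // | /prev_lenP [j lt_jk eq_jk]].
exact: lzlen_ge lt_jk (prev_len_le k) eq_jk.
Qed.

(* An earlier copy of [T[k..]] cannot contain the unique endmarker. *)
Lemma rep_end_lt k : k < size T -> rep_end k < size T.
Proof.
move=> lt_kT; have le_w := prev_len_le k.
case: (ltnP (rep_end k) (size T)) => // full.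
have w_gt0 : 0 < prev_len k by lia.
have [j lt_jk /eqP eq_jk] := prev_lenP w_gt0.
have fit_k : k + prev_len k <= size T by lia.
have fit_j := substr_fit_eq w_gt0 (eqP eq_jk) fit_k.
have T_j : nth 0 T (j + (prev_len k).-1) = 0.
  rewrite (elimT (substr_eqP fit_j fit_k) eq_jk); last by lia.
  by rewrite (_ : k + _ = (size T).-1) //; lia.
by have := endmarker_unique _ T_j; lia.
Qed.

Lemma prev_len_next_neq k j : k < size T -> j < k ->
  substr T j (prev_len k) = substr T k (prev_len k) ->
  nth 0 T (j + prev_len k) != nth 0 T (rep_end k).
Proof.
move=> lt_kT lt_jk eq_jk; apply/eqP => eq_next.
have lt_end := rep_end_lt lt_kT.
have fit_k : k + (prev_len k).+1 <= size T by lia.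
have fit_j : j + (prev_len k).+1 <= size T by lia.
have eq_ext : substr T j (prev_len k).+1 = substr T k (prev_len k).+1.
  apply/eqP/(substr_eqP fit_j fit_k) => t; rewrite ltnS leq_eqVlt.
  by case/predU1P => [-> // | ltt]; move/eqP: eq_jk => /substr_eqP; apply; lia.
by have := prev_len_max _ lt_jk eq_ext; lia.
Qed.

Lemma prev_factor_branches k : k < size T -> branches_right T (substr T k (prev_len k)).
Proof.
move=> lt_kT; have lt_end := rep_end_lt lt_kT.
rewrite /branches_right /next_char size_substr_fit; last by lia.
case: (posnP (prev_len k)) => [w0 | /prev_lenP [j lt_jk eq_jk]].
  exists 0, (size T).-1; rewrite w0 !mem_occs /substr take0 !addn0 !modn_small; try lia.
  by rewrite /circ_occ /= T_last -lt0n !andbT; split; rewrite ?T_pos //; lia.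
exists j, k; rewrite !mem_occs -{1}eq_jk !circ_occ_substr !modn_small; try lia.
by rewrite prev_len_next_neq //; split => //; lia.
Qed.

Definition keeps_occs k s := (prev_len k <= s) &&
  (size (occs T (substr T (rep_end k - s) s)) == size (occs T (substr T k (prev_len k)))).
Definition maxrep_len k := \max_(s < (rep_end k).+1 | keeps_occs k s) s.
Definition maxrep_at k := substr T (rep_end k - maxrep_len k) (maxrep_len k).

Lemma keeps_occs_maxrep_len k : keeps_occs k (maxrep_len k).
Proof.
have keeps_w : keeps_occs k (prev_len k) by rewrite /keeps_occs leqnn addnK eqxx.
by apply: bigmax_condP keeps_w; rewrite ltnS leq_addl.
Qed.

Lemma prev_len_le_maxrep_len k : prev_len k <= maxrep_len k.
Proof. by case/andP: (keeps_occs_maxrep_len k). Qed.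

Lemma size_occs_maxrep_at k :
  size (occs T (maxrep_at k)) = size (occs T (substr T k (prev_len k))).
Proof. by case/andP: (keeps_occs_maxrep_len k) => _ /eqP. Qed.

Lemma maxrep_len_le k : maxrep_len k <= rep_end k.
Proof. by rewrite -ltnS; apply: bigmax_cond_lt. Qed.

Lemma maxrep_len_max k s : s <= rep_end k -> keeps_occs k s -> s <= maxrep_len k.
Proof. by rewrite -ltnS; apply: bigmax_cond_ub. Qed.

Lemma size_maxrep_at k : k < size T -> size (maxrep_at k) = maxrep_len k.
Proof.
move=> lt_kT; have lt_end := rep_end_lt lt_kT; have le_se := maxrep_len_le k.
by rewrite size_substr_fit //; lia.
Qed.

(* Shifting by [maxrep_len k - prev_len k] maps the occurrences of [maxrep_at k]
   injectively into those of its suffix; equal counts make it a bijection. *)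
Lemma maxrep_at_occs_shift k c : k < size T ->
  c \in occs T (substr T k (prev_len k)) ->
  exists2 x, x \in occs T (maxrep_at k) &
    (x + (maxrep_len k - prev_len k)) %% size T = c.
Proof.
move=> lt_kT occc.
have lt_end := rep_end_lt lt_kT.
have le_ws := prev_len_le_maxrep_len k; have le_se := maxrep_len_le k.
set d := maxrep_len k - prev_len k.
have suffix_M : drop d (maxrep_at k) = substr T k (prev_len k).
  by rewrite /maxrep_at drop_substr /d; [congr substr | |]; lia.
have shift_in : {subset [seq (x + d) %% size T | x <- occs T (maxrep_at k)]
                 <= occs T (substr T k (prev_len k))}.
  move=> z /mapP [x]; rewrite mem_occs => /andP [lt_xT occx] ->.
  by rewrite mem_occs ltn_mod -suffix_M circ_occ_drop //; lia.
have [_ /(_ c)] := uniq_min_size (uniq_occs_shift T (maxrep_at k) d) shift_in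
  (eq_leq (esym (etrans (size_map _ _) (size_occs_maxrep_at k)))).
by rewrite occc => /mapP [x occx ->]; exists x.
Qed.

Lemma maxrep_at_branches_right k : k < size T -> branches_right T (maxrep_at k).
Proof.
move=> lt_kT; have lt_end := rep_end_lt lt_kT.
have [c1 [c2 [occ1 occ2]]] := prev_factor_branches lt_kT.
have [x1 occx1 <-] := maxrep_at_occs_shift lt_kT occ1.
have [x2 occx2 <-] := maxrep_at_occs_shift lt_kT occ2.
move=> next_neq; exists x1, x2; split => //; move: next_neq.
have le_ws := prev_len_le_maxrep_len k.
rewrite /next_char size_maxrep_at // size_substr_fit; last by lia.
by rewrite !modnDml -!addnA subnK.
Qed.

(* Either [maxrep_at k] is a prefix of [T], hence preceded by the endmarker at
   one occurrence only, or all its occurrences sharing the preceding character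
   would contradict the maximality of [maxrep_len k]. *)
Lemma maxrep_at_branches_left k : k < size T -> branches_left T (maxrep_at k).
Proof.
move=> lt_kT; have lt_end := rep_end_lt lt_kT.
have le_se := maxrep_len_le k; have le_ws := prev_len_le_maxrep_len k.
have [x1 [x2 [occ1 occ2 next_neq]]] := maxrep_at_branches_right lt_kT.
set i := rep_end k - maxrep_len k.
have occ_i : i \in occs T (maxrep_at k) by rewrite mem_occs circ_occ_substr andbT; lia.
case: (posnP i) => [i0 | i_gt0].
  have [y occy y_neq0] : exists2 y, y \in occs T (maxrep_at k) & y != 0.
    case: (eqVneq x1 0) => [x1_0 | ]; last by exists x1.
    by exists x2 => //; apply: contraNneq next_neq => x2_0; rewrite x1_0 x2_0.
  have lt_yT : y < size T by move: occy; rewrite mem_occs => /andP [].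
  exists i, y; split => //; rewrite i0 prev_pos0 ?prev_pos_gt0; try lia.
  by rewrite T_last eq_sym -lt0n T_pos //; lia.
have prev_i : prev_pos T i = i.-1 by apply: prev_pos_gt0; lia.
case: (boolP (all (fun y => nth 0 T (prev_pos T y) == nth 0 T i.-1) (occs T (maxrep_at k)))).
  move=> /allP same_prev; exfalso.
  have ext : substr T i.-1 (maxrep_len k).+1 = nth 0 T i.-1 :: maxrep_at k.
    by rewrite substr_cons //; lia.
  suff /maxrep_len_max : keeps_occs k (maxrep_len k).+1 by lia.
  rewrite /keeps_occs (_ : rep_end k - _ = i.-1); last by lia.
  rewrite ext size_occs_cons -?size_occs_maxrep_at ?eqxx ?andbT; try lia.
  by move=> y /same_prev /eqP.
by move=> /allPn [y occy prev_neq]; exists i, y; rewrite prev_i eq_sym.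
Qed.

Lemma maxrep_at_maxrep k : k < size T -> is_maxrep T (maxrep_at k).
Proof.
by move=> lt_kT; apply: branches_maxrep;
  [apply: maxrep_at_branches_right | apply: maxrep_at_branches_left].
Qed.

Lemma maxrep_at_node k : k < size T -> st_node T (maxrep_at k).
Proof.
move=> lt_kT; have lt_end := rep_end_lt lt_kT; have le_se := maxrep_len_le k.
rewrite /st_node; case: (posnP (maxrep_len k)) => [s0 | s_gt0].
  by rewrite /maxrep_at s0 /substr take0 eqxx.
rewrite st_right_ext_branches ?orbT //; last exact: maxrep_at_branches_right.
move=> t; rewrite size_maxrep_at // => ltt.
by rewrite nth_substr // T_pos //; lia.
Qed.

Lemma maxrep_at_edge k : k < size T -> exists w,
  (maxrep_at k, w) \in st_edges T /\ nth 0 w (maxrep_len k) = nth 0 T (rep_end k).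
Proof.
move=> lt_kT; have lt_end := rep_end_lt lt_kT; have le_se := maxrep_len_le k.
have := st_edge_from _ (maxrep_at_node lt_kT).
by rewrite subnK //; apply.
Qed.

(* With [w' = prev_len k'], the common key would give an earlier copy
   [T[rep_end k - w' .. rep_end k]] of [T[k' .. rep_end k']], one character
   longer than [prev_len k'] allows. *)
Lemma rep_end_le_of_key k k' : k < size T -> k' < size T ->
  maxrep_at k = maxrep_at k' -> nth 0 T (rep_end k) = nth 0 T (rep_end k') ->
  rep_end k' <= rep_end k.
Proof.
move=> lt_kT lt_k'T eq_M eq_next; rewrite leqNgt; apply/negP => lt_end_end'.
have lt_end' := rep_end_lt lt_k'T.
have le_se := maxrep_len_le k; have le_s'e' := maxrep_len_le k'.
have le_w's' := prev_len_le_maxrep_len k'.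
have eq_s : maxrep_len k' = maxrep_len k by rewrite -!size_maxrep_at // eq_M.
set s := maxrep_len k in eq_s le_se.
have eq_M_nth t : t < s -> nth 0 T (rep_end k - s + t) = nth 0 T (rep_end k' - s + t).
  by move=> lts; have := congr1 (nth 0 ^~ t) eq_M; rewrite /maxrep_at eq_s !nth_substr.
have fit : rep_end k - prev_len k' + (prev_len k').+1 <= size T by lia.
have fit' : k' + (prev_len k').+1 <= size T by lia.
have eq_ext : substr T (rep_end k - prev_len k') (prev_len k').+1 =
              substr T k' (prev_len k').+1.
  apply/eqP/(substr_eqP fit fit') => t; rewrite ltnS leq_eqVlt => /predU1P [-> | ltt].
    by rewrite subnK ?eq_next //; lia.
  have := eq_M_nth (s - prev_len k' + t) _.
  rewrite (_ : rep_end k - s + _ = rep_end k - prev_len k' + t); last by lia.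
  by rewrite (_ : rep_end k' - s + _ = k' + t); lia.
have := prev_len_max _ (_ : rep_end k - prev_len k' < k') eq_ext; lia.
Qed.

(* Since [rep_end k <= k + lzlen A T k <= k' <= rep_end k'], a common key forces
   [prev_len k' = 0]; then [maxrep_at k'] occurs everywhere, so it is empty,
   whereas [maxrep_at k] is not. *)
Lemma maxrep_key_neq A k k' : A =i T -> k < size T -> k' < size T ->
  k + lzlen A T k <= k' ->
  (maxrep_at k, nth 0 T (rep_end k)) != (maxrep_at k', nth 0 T (rep_end k')).
Proof.
move=> eq_AT lt_kT lt_k'T le_kk'; apply/eqP => [[eq_M eq_next]].
have le_e'e := rep_end_le_of_key lt_kT lt_k'T eq_M eq_next.
have lz_gt0 := lzlen_gt0 eq_AT lt_kT; have le_wlz := prev_len_le_lzlen A k.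
have w'0 : prev_len k' = 0 by lia.
have s_gt0 : 0 < maxrep_len k by have := prev_len_le_maxrep_len k; lia.
have := @occs_everywhere (maxrep_at k').
rewrite size_occs_maxrep_at w'0 /substr take0 size_occs_nil => /(_ erefl).
by rewrite -eq_M => /(congr1 size); rewrite size_maxrep_at //=; lia.
Qed.

End EndmarkedText.

Lemma size_Er_Fr T :
  size (Er T) + size (Fr T) = size [seq e <- st_edges T | is_maxrep T e.1].
Proof.
rewrite -(count_predC (fun e => is_maxrep T e.2) (filter _ _)).
rewrite !(count_filter _ _ (st_edges T)).
by rewrite /Er /Fr !size_filter; congr (_ + _); apply: eq_count => e; rewrite /= andbC.
Qed.

Fixpoint lz_starts (A T : seq nat) fuel k : seq nat :=
  if fuel is f.+1 then
    if k < size T then k :: lz_starts A T f (k + lzlen A T k) else [::]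
  else [::].

Lemma lz_count_starts A T fuel k : lz_count A T fuel k = size (lz_starts A T fuel k).
Proof. by elim: fuel k => //= f IH k; case: ifP => //= _; rewrite IH. Qed.

Lemma mem_lz_starts A T fuel k x : x \in lz_starts A T fuel k -> k <= x < size T.
Proof.
elim: fuel k => //= f IH k; case: ifP => // lt_kT.
by rewrite inE => /predU1P [-> | /IH]; [rewrite leqnn | lia].
Qed.

Lemma lz_starts_pairwise A T fuel k :
  pairwise (fun a b => a + lzlen A T a <= b) (lz_starts A T fuel k).
Proof.
elim: fuel k => //= f IH k; case: ifP => //= _; rewrite IH andbT.
by apply/allP => x /mem_lz_starts /andP [].
Qed.

Theorem theorem2 (sigma : nat) (T A : seq nat) :
  1 <= sigma ->
  2 <= size T ->
  nth 0 T (size T).-1 = 0 ->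
  (forall i, i < (size T).-1 -> 1 <= nth 0 T i <= sigma) ->
  uniq A -> A =i T ->
  lz_z A T <= size (Er T) + size (Fr T).
Proof.
move=> _ T_gt1 T_last T_range _ eq_AT.
have T_pos i : i < (size T).-1 -> 0 < nth 0 T i by move/T_range/andP => [].
pose key k := (maxrep_at T k, nth 0 T (k + prev_len T k)).
pose edge_key (e : seq nat * seq nat) := (e.1, nth 0 e.2 (size e.1)).
rewrite size_Er_Fr /lz_z lz_count_starts -(size_map key) -(size_map edge_key).
apply: uniq_leq_size.
  rewrite uniq_pairwise pairwise_map.
  apply: (@sub_in_pairwise _ (fun k => k < size T)) (lz_starts_pairwise A T (size T) 0).
    by move=> k k' lt_kT lt_k'T; exact: maxrep_key_neq.
  by apply/allP => k /mem_lz_starts /andP [].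
move=> _ /mapP [k /mem_lz_starts /andP [_ lt_kT] ->].
have [w [edge_w next_w]] := maxrep_at_edge T_gt1 T_last T_pos lt_kT.
apply/mapP; exists (maxrep_at T k, w).
  by rewrite mem_filter maxrep_at_maxrep.
by rewrite /edge_key /= size_maxrep_at // next_w.
Qed.
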